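(* Let $a>0$, $\epsilon>0$ with $a\epsilon$ small (in particular $a\epsilon<1$). For $x_0^+$, $x_0^-$ let $v_\pm(x,x_0^\pm)$ denote the solution of $$\epsilon\dot v=-a\epsilon v-\sin(\pi\omega_\pm x),\qquad \omega_+=\tfrac32,\ \omega_-=\tfrac12,$$ with $v_\pm(x_0^\pm,x_0^\pm)=\pm1$, and let $\bar P^a_{\epsilon,\pm}(x_0^\pm)$ be the next $x>x_0^\pm$ at which $v_\pm(x,x_0^\pm)=\pm1$. Define, for $n\in\mathbb{N}$, $$x^\pm_{\epsilon,n}=x^\pm_n\pm(-1)^{n+1}\frac{1}{\pi\omega_\pm}\arcsin(a\epsilon),\qquad x_n^+=\tfrac{2n}{3},\ x_n^-=2n.$$ Then for all $n\in\mathbb{N}$, $$\bar P^a_{\epsilon,+}(x^+_{\epsilon,2n+1})\in\left(x^+_{\epsilon,2n+2},x^+_{\epsilon,2n+3}\right),\qquad \bar P^a_{\epsilon,-}(x^-_{\epsilon,2n})\in\left(x^-_{\epsilon,2n+1},x^-_{\epsilon,2n+2}\right).$$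
   Context: The points $x^\pm_{\epsilon,n}$ are the tangency (fold) points of the vector fields $\epsilon\dot v=-a\epsilon v-\sin(\pi\omega_\pm x)$ with the lines $v=\pm1$, i.e. solutions of $-a\epsilon(\pm1)-\sin(\pi\omega_\pm x)=0$ near $x_n^\pm$. These are the dynamics of the regularized system $\epsilon\dot v=-a\epsilon v-\sin(\pi x[1+\frac12\psi(v)])$ in the regions $v\ge1$ and $v\le-1$, where $\psi(v)=\pm1$. *)

From Stdlib Require Import Reals Lra.
Open Scope R_scope.

Definition omega_p : R := 3 / 2.
Definition omega_m : R := 1 / 2.

Definition xn_p (n : nat) : R := 2 * INR n / 3.
Definition xn_m (n : nat) : R := 2 * INR n.

Definition xe_p (a eps : R) (n : nat) : R :=
  xn_p n + (-1) ^ (n + 1) * asin (a * eps) / (PI * omega_p).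
Definition xe_m (a eps : R) (n : nat) : R :=
  xn_m n - (-1) ^ (n + 1) * asin (a * eps) / (PI * omega_m).

Definition is_sol (a eps om : R) (v : R -> R) : Prop :=
  forall x, exists d, derivable_pt_lim v x d /\
    eps * d = - a * eps * v x - sin (PI * om * x).

Definition next_hit (v : R -> R) (x0 c x1 : R) : Prop :=
  x0 < x1 /\ v x1 = c /\ (forall x, x0 < x < x1 -> v x <> c).

(** Multiplying by the integrating factor [exp (a (x - x0))], the gap
    [g x = exp (a (x - x0)) (v x - 1)] between the solution and the level it
    starts from satisfies [eps g' = exp (a (x - x0)) (sin phi - a eps)], where
    [phi] is the phase of the forcing.  With [theta = asin (a eps)], [g] thus
    increases from [g x0 = 0] while [phi] runs through [(theta, PI - theta)] and
    decreases while [phi] runs through [(PI - theta, 2 PI + theta)].  Integrating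
    explicitly over a full period shows that [g < 0] once [phi = 2 PI + theta],
    so [g] has exactly one zero in the decreasing stretch: the next hit.  After a
    shift of [x] (and, for [v_-], a change of sign of [v]) the points
    [x^+-_{eps,n}] are exactly where the phase equals [theta], [PI - theta] and
    [2 PI + theta]. *)

From Stdlib Require Import Reals Lra Lia.
From Coquelicot Require Import Coquelicot.
Open Scope R_scope.

Lemma sin_lt_sin_between t u : 0 < t < PI/2 -> t < u < PI - t -> sin t < sin u.
Proof.
intros Ht Hu. pose proof PI_RGT_0.
destruct (Rle_dec u (PI/2)).
- apply sin_increasing_1; lra.
- rewrite <- (sin_PI_x u). apply sin_increasing_1; lra.
Qed.

Lemma sin_lt_sin_beyond t u : 0 < t < PI/2 -> PI - t < u < 2*PI + t -> sin u < sin t.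
Proof.
intros Ht Hu. pose proof PI_RGT_0.
destruct (Rle_dec u (3*(PI/2))).
- rewrite <- (sin_PI_x t). apply sin_decreasing_1; lra.
- replace u with ((u - 2*PI) + 2 * INR 1 * PI) by (simpl; ring).
  rewrite sin_period. apply sin_increasing_1; lra.
Qed.

Lemma sin_add_odd_PI u n : sin (u + (2 * INR n + 1) * PI) = - sin u.
Proof.
replace (u + (2 * INR n + 1) * PI) with ((u + PI) + 2 * INR n * PI) by ring.
rewrite sin_period, neg_sin. reflexivity.
Qed.

Lemma asin_pos_lt_PI2 z : 0 < z < 1 -> 0 < asin z < PI/2.
Proof.
intros Hz. pose proof (asin_bound_lt z ltac:(lra)) as Hb.
split; [|lra].
destruct (Rlt_le_dec 0 (asin z)) as [Hpos|Hle]; [exact Hpos|].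
assert (sin (asin z) <= sin 0) by (apply sin_incr_1; lra).
rewrite sin_asin, sin_0 in *; lra.
Qed.

Lemma phase_between k y s t x :
  0 < k -> y + s/k < x < y + t/k -> s < k*(x-y) < t.
Proof.
intros Hk Hx.
replace s with (k*(s/k)) by (field; lra).
replace t with (k*(t/k)) by (field; lra).
split; apply Rmult_lt_compat_l; lra.
Qed.

Lemma increasing_of_derive_pos f f' p q :
  (forall x, derivable_pt_lim f x (f' x)) ->
  (forall c, p < c < q -> 0 < f' c) -> p < q -> f p < f q.
Proof.
intros Hf Hpos Hpq.
destruct (MVT_cor2 f f' p q Hpq (fun c _ => Hf c)) as [c [Hc Hcpq]].
assert (0 < f' c * (q - p)) by (apply Rmult_lt_0_compat; [apply Hpos|]; lra).
lra.
Qed.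

Lemma decreasing_of_derive_neg f f' p q :
  (forall x, derivable_pt_lim f x (f' x)) ->
  (forall c, p < c < q -> f' c < 0) -> p < q -> f q < f p.
Proof.
intros Hf Hneg Hpq.
assert (- f p < - f q); [|lra].
apply (increasing_of_derive_pos (fun x => - f x) (fun x => - f' x)); [|intros c Hc; specialize (Hneg c Hc); lra|exact Hpq].
intro x. apply derivable_pt_lim_opp, Hf.
Qed.

Lemma increment_eq_of_same_derive f g d p q :
  (forall x, derivable_pt_lim f x (d x)) -> (forall x, derivable_pt_lim g x (d x)) ->
  p < q -> f q - f p = g q - g p.
Proof.
intros Hf Hg Hpq.
destruct (MVT_cor2 (fun x => f x - g x) (fun _ => 0) p q Hpq) as [c [Hc _]].
- intros c _. replace 0 with (d c - d c) by ring. apply derivable_pt_lim_minus; auto.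
- lra.
Qed.

Lemma integrating_factor_derive a eps x0 c V d g x :
  eps <> 0 -> derivable_pt_lim V x d -> eps * d = - a * eps * V x + g ->
  derivable_pt_lim (fun x => exp (a*(x-x0)) * (V x - c)) x
    (exp (a*(x-x0)) * ((g - a*eps*c)/eps)).
Proof.
intros Heps HVd Hode.
apply is_derive_Reals. apply is_derive_Reals in HVd.
evar (l : R).
assert (H : is_derive (fun x => exp (a*(x-x0)) * (V x - c)) x l).
{ auto_derive. exists d; exact HVd. subst l. reflexivity. }
replace (exp (a*(x-x0)) * ((g - a*eps*c)/eps)) with l; [exact H|].
subst l. replace (Derive (fun x => V x) x) with d by (symmetry; now apply is_derive_unique).
replace d with ((- a*eps*V x + g)/eps) by (rewrite <- Hode; field; exact Heps).
unfold Rminus. field. exact Heps.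
Qed.

Lemma next_hit_opp v x0 c x1 :
  next_hit (fun x => - v x) x0 c x1 -> next_hit v x0 (- c) x1.
Proof.
intros [Hx1 [Hhit Hnone]]. split; [exact Hx1|]. split; [lra|].
intros x Hx Hvx. apply (Hnone x Hx). lra.
Qed.

Definition is_forced_sol (a eps k y : R) (V : R -> R) : Prop :=
  forall x, exists d, derivable_pt_lim V x d /\
    eps * d = - a * eps * V x + sin (k * (x - y)).

Section Forced_response.

Variables (a eps k y th : R) (V : R -> R).
Hypotheses (Ha : 0 < a) (Heps : 0 < eps) (Hk : 0 < k).
Hypotheses (Hth : 0 < th < PI/2) (Hsin_th : sin th = a * eps).
Hypothesis HV : is_forced_sol a eps k y V.

Let x0 := y + th/k.
Let xA := y + (PI - th)/k.
Let xB := y + (2*PI + th)/k.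

Hypothesis HV0 : V x0 = 1.

Let gap x := exp (a*(x-x0)) * (V x - 1).
Let gap' x := exp (a*(x-x0)) * ((sin (k*(x-y)) - a*eps)/eps).

Lemma gap_derive x : derivable_pt_lim gap x (gap' x).
Proof.
destruct (HV x) as [d [Hd Hode]].
unfold gap'. rewrite <- (Rmult_1_r (a*eps)).
apply (integrating_factor_derive a eps x0 1 V d); [lra|exact Hd|exact Hode].
Qed.

Lemma gap'_pos c : x0 < c < xA -> 0 < gap' c.
Proof.
intros Hc. apply Rmult_lt_0_compat; [apply exp_pos|].
apply Rdiv_lt_0_compat; [|exact Heps].
assert (sin th < sin (k*(c-y))); [|lra].
apply sin_lt_sin_between; [exact Hth|]. apply phase_between; [exact Hk|exact Hc].
Qed.

Lemma gap'_neg c : xA < c < xB -> gap' c < 0.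
Proof.
intros Hc. unfold gap'.
assert (Hsin : sin (k*(c-y)) < sin th).
{ apply sin_lt_sin_beyond; [exact Hth|]. apply phase_between; [exact Hk|exact Hc]. }
assert (0 < exp (a*(c-x0)) * ((a*eps - sin (k*(c-y)))/eps)); [|nra].
apply Rmult_lt_0_compat; [apply exp_pos|]. apply Rdiv_lt_0_compat; lra.
Qed.

Lemma x0_lt_xA : x0 < xA.
Proof.
unfold x0, xA. apply Rplus_lt_compat_l, Rmult_lt_compat_r; [apply Rinv_0_lt_compat, Hk|lra].
Qed.

Lemma xA_lt_xB : xA < xB.
Proof.
pose proof PI_RGT_0.
unfold xA, xB. apply Rplus_lt_compat_l, Rmult_lt_compat_r; [apply Rinv_0_lt_compat, Hk|lra].
Qed.

Lemma gap_x0 : gap x0 = 0.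
Proof. unfold gap. rewrite HV0. ring. Qed.

Lemma gap_pos x : x0 < x <= xA -> 0 < gap x.
Proof.
intros Hx. rewrite <- gap_x0.
apply (increasing_of_derive_pos gap gap'); [exact gap_derive| |lra].
intros c Hc. apply gap'_pos. lra.
Qed.

Lemma gap_decreasing p q : xA <= p -> p < q -> q <= xB -> gap q < gap p.
Proof.
intros Hp Hpq Hq.
apply (decreasing_of_derive_neg gap gap'); [exact gap_derive| |exact Hpq].
intros c Hc. apply gap'_neg. lra.
Qed.

(* [exp (a (x - x0)) (a sin phi - k cos phi) / (a^2 + k^2)] is a primitive of
   [exp (a (x - x0)) sin phi], with [phi = k (x - y)]. *)
Let gap_primitive x := exp (a*(x-x0)) *
  ((a * sin (k*(x-y)) - k * cos (k*(x-y))) / (eps * (a*a + k*k)) - 1).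

Lemma gap_primitive_derive x : derivable_pt_lim gap_primitive x (gap' x).
Proof.
apply is_derive_Reals.
evar (l : R).
assert (H : is_derive gap_primitive x l).
{ unfold gap_primitive. auto_derive. exact I. subst l. reflexivity. }
replace (gap' x) with l; [exact H|].
subst l. unfold gap'. unfold Rminus. field.
split; [lra|]. nra.
Qed.

Lemma gap_xB_neg : gap xB < 0.
Proof.
pose proof PI_RGT_0.
assert (Hcos : 0 < cos th) by (apply cos_gt_0; lra).
assert (Hnorm : 0 < a*a + k*k) by nra.
assert (Hincr : gap xB = gap_primitive xB - gap_primitive x0).
{ rewrite <- (Rminus_0_r (gap xB)), <- gap_x0.
  apply (increment_eq_of_same_derive gap gap_primitive gap');
    [exact gap_derive|exact gap_primitive_derive|].
  pose proof x0_lt_xA. pose proof xA_lt_xB. lra. }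
assert (Ephase0 : k*(x0 - y) = th) by (unfold x0; field; lra).
assert (EphaseB : k*(xB - y) = th + 2 * INR 1 * PI) by (unfold xB; simpl; field; lra).
assert (Hgrowth : 1 < exp (a*(xB - x0))).
{ rewrite <- exp_0. apply exp_increasing, Rmult_lt_0_compat; [exact Ha|].
  pose proof x0_lt_xA. pose proof xA_lt_xB. lra. }
assert (Hdrop : 0 < (k * cos th + eps*k*k) / (eps * (a*a + k*k))).
{ apply Rdiv_lt_0_compat; [|nra].
  assert (0 < k * cos th) by nra. assert (0 < eps*k*k) by (apply Rmult_lt_0_compat; nra). lra. }
(* The bracket of [gap_primitive] is periodic in the phase, so over one period
   only the exponential factor changes and [gap xB] is [exp (a (xB - x0)) - 1]
   times its (negative) value at [x0]. *)
rewrite Hincr. unfold gap_primitive.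
rewrite Ephase0, EphaseB, sin_period, cos_period, Rminus_diag, Rmult_0_r, exp_0, Hsin_th.
replace ((a * (a * eps) - k * cos th) / (eps * (a * a + k * k)) - 1)
  with (- ((k * cos th + eps*k*k) / (eps * (a*a + k*k)))) by (field; lra).
nra.
Qed.

Theorem forced_next_hit :
  exists x1, next_hit V (y + th/k) 1 x1 /\ y + (PI - th)/k < x1 < y + (2*PI + th)/k.
Proof.
pose proof xA_lt_xB as HAB.
assert (HgapA : 0 < gap xA) by (apply gap_pos; pose proof x0_lt_xA; lra).
pose proof gap_xB_neg as HgapB.
assert (Hcont : continuity gap).
{ intro x. apply derivable_continuous_pt. exists (gap' x). apply gap_derive. }
destruct (IVT (fun x => - gap x) xA xB) as [z [Hz Hgapz]];
  [apply continuity_opp, Hcont|exact HAB|lra|lra|].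
assert (Hgapz0 : gap z = 0) by lra.
assert (z <> xA) by (intro e; rewrite e in Hgapz0; lra).
assert (z <> xB) by (intro e; rewrite e in Hgapz0; lra).
assert (Hz' : xA < z < xB) by lra.
exists z. split; [|exact Hz'].
change (next_hit V x0 1 z). split; [pose proof x0_lt_xA; lra|]. split.
- unfold gap in Hgapz0. pose proof (exp_pos (a*(z-x0))).
  apply Rmult_integral in Hgapz0. destruct Hgapz0; lra.
- intros x Hx HVx.
  assert (Hgapx : gap x = 0) by (unfold gap; rewrite HVx; ring).
  destruct (Rle_dec x xA).
  + assert (0 < gap x) by (apply gap_pos; lra). lra.
  + assert (gap z < gap x) by (apply gap_decreasing; lra). lra.
Qed.

End Forced_response.

Lemma is_sol_p_forced a eps n v :
  is_sol a eps omega_p v -> is_forced_sol a eps (PI * omega_p) ((4 * INR n + 2) / 3) v.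
Proof.
intros Hv x. destruct (Hv x) as [d [Hd Hode]]. exists d. split; [exact Hd|].
assert (sin (PI * omega_p * x) = - sin (PI * omega_p * (x - (4 * INR n + 2) / 3)));
  [|lra].
rewrite <- (sin_add_odd_PI _ n). f_equal. unfold omega_p. field.
Qed.

Lemma is_sol_m_forced_opp a eps n v :
  is_sol a eps omega_m v -> is_forced_sol a eps (PI * omega_m) (4 * INR n) (fun x => - v x).
Proof.
intros Hv x. destruct (Hv x) as [d [Hd Hode]]. exists (- d). split.
- apply derivable_pt_lim_opp, Hd.
- assert (sin (PI * omega_m * x) = sin (PI * omega_m * (x - 4 * INR n))); [|lra].
  rewrite <- (sin_period (PI * omega_m * (x - 4 * INR n)) n). f_equal. unfold omega_m. field.
Qed.

Lemma xe_p_window a eps n :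
  let y := (4 * INR n + 2) / 3 in let k := PI * omega_p in let th := asin (a * eps) in
  xe_p a eps (2 * n + 1) = y + th / k /\
  xe_p a eps (2 * n + 2) = y + (PI - th) / k /\
  xe_p a eps (2 * n + 3) = y + (2 * PI + th) / k.
Proof.
pose proof PI_RGT_0. unfold xe_p, xn_p, omega_p. cbv zeta.
replace (2 * n + 1 + 1)%nat with (2 * (n + 1))%nat by lia.
replace (2 * n + 2 + 1)%nat with (S (2 * (n + 1)))%nat by lia.
replace (2 * n + 3 + 1)%nat with (2 * (n + 2))%nat by lia.
rewrite !pow_1_even, pow_1_odd, !plus_INR, !mult_INR. simpl.
repeat split; field; lra.
Qed.

Lemma xe_m_window a eps n :
  let y := 4 * INR n in let k := PI * omega_m in let th := asin (a * eps) in
  xe_m a eps (2 * n) = y + th / k /\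
  xe_m a eps (2 * n + 1) = y + (PI - th) / k /\
  xe_m a eps (2 * n + 2) = y + (2 * PI + th) / k.
Proof.
pose proof PI_RGT_0. unfold xe_m, xn_m, omega_m. cbv zeta.
replace (2 * n + 1)%nat with (S (2 * n))%nat by lia.
replace (S (2 * n) + 1)%nat with (2 * (n + 1))%nat by lia.
replace (2 * n + 2 + 1)%nat with (S (2 * (n + 1)))%nat by lia.
rewrite pow_1_even, !pow_1_odd, !S_INR, !plus_INR, !mult_INR. simpl.
repeat split; field; lra.
Qed.

Theorem lemma8 :
  exists delta : R, 0 < delta /\ delta <= 1 /\
  forall a eps : R, 0 < a -> 0 < eps -> a * eps < delta ->
  forall n : nat,
    (forall v : R -> R, is_sol a eps omega_p v ->
       v (xe_p a eps (2 * n + 1)) = 1 ->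
       exists x1, next_hit v (xe_p a eps (2 * n + 1)) 1 x1 /\
         xe_p a eps (2 * n + 2) < x1 < xe_p a eps (2 * n + 3)) /\
    (forall v : R -> R, is_sol a eps omega_m v ->
       v (xe_m a eps (2 * n)) = -1 ->
       exists x1, next_hit v (xe_m a eps (2 * n)) (-1) x1 /\
         xe_m a eps (2 * n + 1) < x1 < xe_m a eps (2 * n + 2)).
Proof.
exists 1. split; [lra|]. split; [lra|].
intros a eps Ha Heps Hae n.
assert (Hae0 : 0 < a * eps) by (apply Rmult_lt_0_compat; assumption).
pose proof (asin_pos_lt_PI2 (a * eps) (conj Hae0 Hae)) as Hth.
pose proof (sin_asin (a * eps) ltac:(lra)) as Hsin.
pose proof PI_RGT_0.
split.
- intros v Hv Hv0.
  destruct (xe_p_window a eps n) as (E1 & E2 & E3). rewrite E1, E2, E3 in *.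
  apply (forced_next_hit a eps (PI * omega_p)); try assumption.
  + unfold omega_p. lra.
  + apply is_sol_p_forced, Hv.
- intros v Hv Hv0.
  destruct (xe_m_window a eps n) as (E1 & E2 & E3). rewrite E1, E2, E3 in *.
  destruct (forced_next_hit a eps (PI * omega_m) (4 * INR n) (asin (a * eps))
              (fun x => - v x)) as [x1 [Hhit Hx1]]; try assumption.
  + unfold omega_m. lra.
  + apply is_sol_m_forced_opp, Hv.
  + rewrite Hv0. ring.
  + exists x1. split; [apply next_hit_opp, Hhit|exact Hx1].
Qed.
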